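(* (a) For every odd integer $n\ge 3$, the cycle $C_n$ is $\mathbb{Z}_n$-distance antimagic. (b) Let $k\ge 2$ and let $n_1,\ldots,n_k\ge 3$ be odd integers each of which divides $k-1$. Then $C_{n_1}\Box\cdots\Box C_{n_k}$ is $\mathbb{Z}_{n_1}\times\cdots\times\mathbb{Z}_{n_k}$-distance antimagic. In particular, for every odd prime $p$ and integer $d\ge 1$, the Cartesian product of $pd+1$ copies of $C_p$ is $\mathbb{Z}_p^{pd+1}$-distance antimagic.
   Context: $C_n$ is the cycle of length $n$; $\mathbb{Z}_m$ is the cyclic group of integers modulo $m$. The Cartesian product $G_1\Box\cdots\Box G_k$ has vertex set $V(G_1)\times\cdots\times V(G_k)$, with two tuples adjacent iff they differ in exactly one coordinate $i$ and are adjacent there in $G_i$. For a graph $G$ with $n$ vertices and an Abelian group $A$ of order $n$ (written additively), and a bijection $f:V(G)\to A$, the weight of $x$ is $w_f(x)=\sum_{y\in N(x)} f(y)$ computed in $A$ ($N(x)$ the open neighbourhood). $f$ is an $A$-distance antimagic labelling if all weights are pairwise distinct; $G$ is $A$-distance antimagic if it admits such a labelling. *)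

From HB Require Import structures.
From mathcomp Require Import all_boot all_order all_algebra.
Set Implicit Arguments. Unset Strict Implicit. Unset Printing Implicit Defensive.
Import GRing.Theory.
Local Open Scope ring_scope.

(** Graphs are symmetric irreflexive relations on a finite vertex type. *)

(** The cycle C_n, on vertex set Z_n = {0,...,n-1}: x ~ y iff y = x +- 1
    (mod n).  Only used for n >= 3. *)
Definition cycle_rel (n : nat) : rel 'Z_n :=
  fun x y => (y == x + 1) || (x == y + 1).
Arguments cycle_rel n : clear implicits.

Definition box_rel (I : finType) (T_ : I -> finType) (e : forall i, rel (T_ i))
  : rel {dffun forall i, T_ i} :=
  fun x y => [exists i, e i (x i) (y i) &&
                        [forall j, (j != i) ==> (x j == y j)]].

Definition weight (V : finType) (e : rel V) (A : zmodType) (f : V -> A) (x : V) : A :=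
  \sum_(y | e x y) f y.

Definition dist_antimagic_labelling (V : finType) (e : rel V) (A : zmodType)
  (f : V -> A) : Prop :=
  bijective f /\ injective (weight e f).

Definition dist_antimagic (V : finType) (e : rel V) (A : zmodType) : Prop :=
  exists f : V -> A, dist_antimagic_labelling e f.

Definition prodZ (k : nat) (ns : 'I_k -> nat) := {dffun forall i : 'I_k, 'Z_(ns i)}.

HB.instance Definition _ k ns := Finite.on (@prodZ k ns).

Section ProdZ.
Variables (k : nat) (ns : 'I_k -> nat).
Definition prodZ_zero : prodZ ns := [ffun i => 0].
Definition prodZ_add (x y : prodZ ns) : prodZ ns := [ffun i => x i + y i].
Definition prodZ_opp (x : prodZ ns) : prodZ ns := [ffun i => - x i].
Lemma prodZ_addA : associative prodZ_add.
Proof. by move=> x y z; apply/ffunP=> i; rewrite !ffunE addrA. Qed.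
Lemma prodZ_addC : commutative prodZ_add.
Proof. by move=> x y; apply/ffunP=> i; rewrite !ffunE addrC. Qed.
Lemma prodZ_add0 : left_id prodZ_zero prodZ_add.
Proof. by move=> x; apply/ffunP=> i; rewrite !ffunE add0r. Qed.
Lemma prodZ_addN : left_inverse prodZ_zero prodZ_opp prodZ_add.
Proof. by move=> x; apply/ffunP=> i; rewrite !ffunE addNr. Qed.
End ProdZ.

HB.instance Definition _ k ns :=
  GRing.isZmodule.Build (@prodZ k ns) (@prodZ_addA k ns) (@prodZ_addC k ns)
    (@prodZ_add0 k ns) (@prodZ_addN k ns).

From HB Require Import structures.
From mathcomp Require Import all_boot all_order all_algebra.
Set Implicit Arguments. Unset Strict Implicit. Unset Printing Implicit Defensive.
Import GRing.Theory.
Local Open Scope ring_scope.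

(* Every labelling in the theorem is the identity map of the vertex set onto
   the group, so the whole content is that the neighbourhood weight of the
   identity labelling is injective.
   - In C_n (n >= 3) the neighbours of x are x + 1 and x - 1, which are
     distinct because 2 != 0 in Z_n; hence the weight of x is 2x.
   - In a product of k cycles C_{n_1} [] ... [] C_{n_k} (all n_i >= 3) the
     neighbours of x are the 2k tuples obtained by moving one coordinate by
     +-1; summing them, the j-th coordinate of the weight is 2k x_j.
   - Multiplication by m is injective on Z_n when m is coprime to n; for odd n
     this applies to m = 2, and to m = 2k when n divides k - 1.
   Part (a) and a general criterion for products (each n_i >= 3 coprime to 2k)
   are proved first; part (b) and its special case k = pd + 1, n_i = p follow. *)

Lemma Zp_mulrn_inj (n m : nat) : (1 < n)%N -> coprime n m ->
  injective (fun x : 'Z_n => x *+ m).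
Proof.
move=> n_gt1 co_nm x y /=; rewrite -(mulr_natr x) -(mulr_natr y).
by apply: mulIr; rewrite unitZpE.
Qed.

Lemma Zp_two_neq0 (n : nat) : (2 < n)%N -> (1 + 1 : 'Z_n) != 0.
Proof.
move=> n_gt2; apply/eqP => two_eq0.
by have := val_Zp_nat (ltnW n_gt2) 2; rewrite [2%:R]two_eq0 modn_small.
Qed.

Lemma cycle_weight_id (n : nat) (x : 'Z_n) : (2 < n)%N ->
  weight (cycle_rel n) id x = x *+ 2.
Proof.
move=> n_gt2; rewrite /weight.
rewrite (eq_bigl (pred2 (x + 1) (x - 1))); last first.
  move=> y; rewrite /cycle_rel /=; congr (_ || _).
  by apply/eqP/eqP => ->; rewrite ?addrK ?subrK.
have neighbours_neq : (x - 1 == x + 1) = false.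
  apply/negbTE; rewrite -subr_eq0 opprD addrACA subrr add0r -opprD oppr_eq0.
  exact: Zp_two_neq0.
rewrite (bigD1 (x + 1)) /= ?eqxx // (bigD1 (x - 1)) /= ?eqxx ?neighbours_neq ?orbT //.
rewrite big1 ?addr0; last by move=> y /andP[/andP[/orP[] /eqP ->]]; rewrite ?eqxx.
by rewrite addrACA subrr addr0 mulr2n.
Qed.

Lemma cycle_dist_antimagic (n : nat) : odd n -> (3 <= n)%N ->
  dist_antimagic (cycle_rel n) 'Z_n.
Proof.
move=> odd_n n_ge3; exists id; split; first by exists id.
move=> x y; rewrite !cycle_weight_id //.
by apply: Zp_mulrn_inj; rewrite ?coprimen2 // ltnW.
Qed.

Section CycleProduct.
Variables (k : nat) (ns : 'I_k -> nat).
Hypothesis ns_gt2 : forall i, (2 < ns i)%N.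

Let box := box_rel (fun i => cycle_rel (ns i)).

Definition box_step (x : prodZ ns) (u : 'I_k * bool) : prodZ ns :=
  [ffun j => if j == u.1 then (if u.2 then x j + 1 else x j - 1) else x j].

Lemma prodZ_sumE (I : finType) (P : pred I) (F : I -> prodZ ns) (j : 'I_k) :
  (\sum_(i | P i) F i) j = \sum_(i | P i) F i j.
Proof.
apply: (big_morph (fun g : prodZ ns => g j)); last by rewrite /GRing.zero /= ffunE.
by move=> a b; rewrite /GRing.add /= ffunE.
Qed.

Lemma box_step_inj (x : prodZ ns) : injective (box_step x).
Proof.
move=> [i b] [i' b'] /ffunP /(_ i); rewrite !ffunE eqxx /=.
case: eqP => [<- | _].
  have /negbTE two_neq0 := Zp_two_neq0 (ns_gt2 i).
  case: b; case: b' => //= /addrI /eqP; rewrite ?[- 1 == 1]eq_sym;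
    by rewrite -subr_eq0 opprK two_neq0.
by case: b; rewrite -{2}[x i]addr0 => /addrI /eqP; rewrite ?oppr_eq0 oner_eq0.
Qed.

Lemma box_relE (x y : prodZ ns) :
  box x y = (y \in [set box_step x u | u : 'I_k * bool]).
Proof.
apply/existsP/imsetP => [[i /andP[adj /forallP same]] | [[i b] _ ->]].
  have other j : j != i -> y j = x j by move=> ne; have /implyP/(_ ne)/eqP := same j.
  case/orP: adj => /eqP adj; [exists (i, true) | exists (i, false)] => //;
    apply/ffunP => j; rewrite ffunE /=;
    by case: eqP => [-> | /eqP /other]; rewrite ?adj ?addrK.
exists i; apply/andP; split.
  by rewrite /cycle_rel ffunE eqxx; case: b; rewrite /= ?subrK eqxx ?orbT.
by apply/forallP => j; apply/implyP => ne; rewrite ffunE (negbTE ne).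
Qed.

(* Under the identity labelling the j-th coordinate of the weight of x is
   2k x_j: each coordinate i contributes (x_j + 1) + (x_j - 1) = 2 x_j if
   i = j, and x_j + x_j otherwise. *)
Lemma box_weight_id (x : prodZ ns) (j : 'I_k) :
  weight box (@id (prodZ ns)) x j = x j *+ (2 * k).
Proof.
rewrite /weight (eq_bigl _ _ (box_relE x)) big_imset /=; last first.
  by move=> u v _ _; apply: box_step_inj.
rewrite prodZ_sumE (eq_bigl xpredT) // -(pair_bigA _ (fun i b => box_step x (i, b) j)).
rewrite (eq_bigr (fun _ => x j *+ 2)); first by rewrite sumr_const card_ord -mulrnA.
move=> i _; rewrite big_bool /= !ffunE.
case: eqP => _ /=; last by rewrite mulr2n.
by rewrite addrACA subrr addr0 mulr2n.
Qed.

Lemma box_dist_antimagic :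
  (forall i, coprime (ns i) (2 * k)) -> dist_antimagic box (prodZ ns).
Proof.
move=> co_ns; exists (@id (prodZ ns)); split; first by exists id.
move=> x y eq_w; apply/ffunP => j.
have := congr1 (fun g : prodZ ns => g j) eq_w; rewrite /= !box_weight_id.
by apply: Zp_mulrn_inj; rewrite ?co_ns // ltnW.
Qed.

End CycleProduct.

(* For odd n dividing k - 1 (so k = 1 mod n), n is coprime to 2k. *)
Lemma coprime_double_of_dvd_pred (n k : nat) :
  odd n -> (n %| k.-1)%N -> (0 < k)%N -> coprime n (2 * k).
Proof.
move=> odd_n /dvdnP[q def_k] k_gt0; rewrite coprimeMr coprimen2 odd_n /=.
by rewrite -coprime_modr -(prednK k_gt0) def_k -addn1 modnMDl coprime_modr coprimen1.
Qed.

Lemma cycle_product_dist_antimagic (k : nat) (ns : 'I_k -> nat) : (2 <= k)%N ->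
  (forall i, [&& odd (ns i), (3 <= ns i)%N & (ns i %| k.-1)%N]) ->
  dist_antimagic (box_rel (fun i => cycle_rel (ns i))) (prodZ ns).
Proof.
move=> k_ge2 ns_ok; apply: box_dist_antimagic => i; case/and3P: (ns_ok i) => //.
by move=> odd_n _ dvd_n; apply: coprime_double_of_dvd_pred (ltnW k_ge2).
Qed.

Theorem mainTheorem9 :
  (* (a) *)
  (forall n : nat, odd n -> (3 <= n)%N ->
     dist_antimagic (cycle_rel n) 'Z_(n)) /\
  (* (b) *)
  (forall (k : nat) (ns : 'I_k -> nat), (2 <= k)%N ->
     (forall i, [&& odd (ns i), (3 <= ns i)%N & (ns i %| k.-1)%N]) ->
     dist_antimagic (box_rel (fun i => cycle_rel (ns i))) (prodZ ns)) /\
  (* in particular *)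
  (forall p d : nat, prime p -> odd p -> (1 <= d)%N ->
     dist_antimagic (box_rel (fun i : 'I_(p * d).+1 => cycle_rel p))
                    (prodZ (fun _ : 'I_(p * d).+1 => p))).
Proof.
split; first exact: cycle_dist_antimagic.
split; first exact: cycle_product_dist_antimagic.
move=> p d p_prime odd_p d_gt0.
have p_ge3 : (3 <= p)%N.
  by move: (prime_gt1 p_prime) odd_p; case: p {p_prime} => [|[|[|]]].
apply: (@cycle_product_dist_antimagic _ (fun _ => p)).
  by rewrite ltnS muln_gt0 d_gt0 andbT (leq_trans _ p_ge3).
by move=> _; rewrite odd_p p_ge3 /= dvdn_mulr.
Qed.
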